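(* In the Tempered Gibbs Sampler setting below, let $b=\sup_{i,\boldsymbol{x}} f(x_i|\boldsymbol{x}_{-i})/g(x_i|\boldsymbol{x}_{-i})$. Let $\mathbf{X}\sim fZ$ and $W=w(\mathbf{X})$. Then $$\mathrm{Var}(W)\le b-1\qquad\text{and}\qquad \mathrm{var}(h,SIS)\le b\,\mathrm{var}_f(h),$$ where $\mathrm{var}_f(h)=\mathbb{E}_f[h^2]-\mathbb{E}_f[h]^2$.
   Context: Setting: $f$ is a probability density on $\mathcal{X}=\mathcal{X}_1\times\dots\times\mathcal{X}_d$; for each $i,\boldsymbol{x}_{-i}$, $g(\cdot|\boldsymbol{x}_{-i})$ is a probability density on $\mathcal{X}_i$ absolutely continuous w.r.t. the full conditional $f(\cdot|\boldsymbol{x}_{-i})$. Let $p_i(\boldsymbol{x})=g(x_i|\boldsymbol{x}_{-i})/f(x_i|\boldsymbol{x}_{-i})$, $Z(\boldsymbol{x})=\frac1d\sum_i p_i(\boldsymbol{x})$, $w=1/Z$; $fZ$ is a probability density on $\mathcal{X}$. For $h\in L^1(\mathcal{X},f)$, the self-normalised importance sampling estimator is $\hat h_n^{SIS}=\sum_{i=1}^n w(\boldsymbol{y}^{(i)})h(\boldsymbol{y}^{(i)})/\sum_{i=1}^n w(\boldsymbol{y}^{(i)})$ with $\boldsymbol{y}^{(i)}$ i.i.d. from $fZ$, and $\mathrm{var}(h,SIS)=\lim_{n\to\infty}n\,\mathrm{var}(\hat h_n^{SIS})$, which equals $\mathbb{E}_f[\bar h^2 w]$ with $\bar h=h-\mathbb{E}_f[h]$.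 *)

From HB Require Import structures.
From mathcomp Require Import all_boot all_order all_algebra.
From mathcomp Require Import all_classical all_reals all_analysis.
Set Implicit Arguments. Unset Strict Implicit. Unset Printing Implicit Defensive.
Import Order.TTheory GRing.Theory Num.Theory.
Local Open Scope classical_set_scope.
Local Open Scope ring_scope.

Section TGS.
Context {R : realType} {d0 : measure_display} {X : measurableType d0}.
Variable (mu : {measure set X -> \bar R}).
Variable (d : nat) (f : X -> R) (fc gc : 'I_d -> X -> R).
(* fc i x = f(x_i | x_{-i}),  gc i x = g(x_i | x_{-i}) *)

Definition p_tgs (i : 'I_d) (x : X) : R := gc i x / fc i x.
Definition Z_tgs (x : X) : R := d%:R^-1 * \sum_(i < d) p_tgs i x.
Definition w_tgs (x : X) : R := (Z_tgs x)^-1.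

Definition ratio_tgs (i : 'I_d) (x : X) : \bar R :=
  if gc i x == 0 then +oo%E else (fc i x / gc i x)%:E.
Definition b_tgs : \bar R :=
  ereal_sup [set r | exists i x, 0 < fc i x /\ r = ratio_tgs i x].

Definition Ef (F : X -> R) : \bar R := \int[mu]_x (f x * F x)%:E.
Definition EfZ (F : X -> R) : \bar R := \int[mu]_x (f x * Z_tgs x * F x)%:E.

Definition VarW : \bar R :=
  EfZ (fun x => (w_tgs x - fine (EfZ w_tgs)) ^+ 2).

Definition var_f (h : X -> R) : \bar R :=
  Ef (fun x => (h x - fine (Ef h)) ^+ 2).

Definition var_SIS (h : X -> R) : \bar R :=
  Ef (fun x => (h x - fine (Ef h)) ^+ 2 * w_tgs x).

End TGS.

(* Where f > 0 every full conditional f(x_i|x_-i) is positive, so each ratio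
   f(x_i|x_-i)/g(x_i|x_-i) is at most b; hence every p_i is at least 1/b, so is
   their average Z, and w = 1/Z <= b. Integrating f w hbar^2 <= b f hbar^2 gives
   the SIS bound. For Var(W), E_fZ[w] = E_f[1] = 1, so expanding the square gives
   Var(W) = E_f[w] - 1 <= b - 1 (written as Var(W) + 2 = E_f[w] + 1 to avoid
   subtracting extended reals). *)

From HB Require Import structures.
From mathcomp Require Import all_boot all_order all_algebra.
From mathcomp Require Import all_classical all_reals all_analysis.
From mathcomp Require Import ring measurable_realfun.
Import Order.TTheory GRing.Theory Num.Theory.
Local Open Scope classical_set_scope.
Local Open Scope ring_scope.

Lemma measurable_invr (R : realType) : measurable_fun setT (@GRing.inv R).
Proof.
have -> : [set: R] = ~` [set 0] `|` [set 0] by rewrite setUC setUv.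
apply/measurable_funU => //; first exact: measurableC.
split; last exact: measurable_fun_set1.
apply: open_continuous_measurable_fun.
  by rewrite openC; apply/accessible_closed_set1/hausdorff_accessible/norm_hausdorff.
by move=> x; rewrite inE /= => /eqP x0; exact: inv_continuous.
Qed.

Section nonneg_integral.
Context {R : realType} {d0 : measure_display} {T : measurableType d0}.
Variable mu : {measure set T -> \bar R}.
Local Open Scope ereal_scope.

Lemma ge0_integralD_EFin (g1 g2 : T -> R) :
  measurable_fun setT g1 -> measurable_fun setT g2 ->
  (forall x, 0 <= g1 x)%R -> (forall x, 0 <= g2 x)%R ->
  \int[mu]_x (g1 x + g2 x)%:E = \int[mu]_x (g1 x)%:E + \int[mu]_x (g2 x)%:E.
Proof.
move=> mg1 mg2 g10 g20; under eq_integral do rewrite EFinD.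
by apply: ge0_integralD => // [x _||x _|]; rewrite ?lee_fin //;
  exact/measurable_EFinP.
Qed.

Lemma integral_neq0_exists_gt0 (g : T -> R) : (forall x, 0 <= g x)%R ->
  \int[mu]_x (g x)%:E != 0 -> exists x, (0 < g x)%R.
Proof.
move=> g0; apply: contra_neqP => /forallNP g_le0; rewrite -(integral0 mu setT).
apply: eq_integral => x _; congr EFin; apply/eqP.
by rewrite eq_le g0 andbT leNgt; apply/negP/g_le0.
Qed.

Lemma ge0_integral_mulr_le (g w : T -> R) (b : \bar R) :
  measurable_fun setT g -> measurable_fun setT w ->
  (forall x, 0 <= g x)%R -> (forall x, 0 <= w x)%R ->
  (forall x, (0 < g x)%R -> (w x)%:E <= b) ->
  \int[mu]_x (g x * w x)%:E <= b * \int[mu]_x (g x)%:E.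
Proof.
move=> mg mw g0 w0 wb.
have mEg : measurable_fun setT (EFin \o g) by exact/measurable_EFinP.
have [ig0|ig_neq0] := eqVneq (\int[mu]_x (g x)%:E) 0.
  have g_ae0 : ae_eq mu setT (EFin \o g) (cst 0).
    apply/(ae_eq_integral_abs mu measurableT mEg); rewrite -[RHS]ig0.
    by apply: eq_integral => x _ /=; rewrite ger0_norm.
  rewrite ig0 mule0 (ae_eq_integral (cst 0)) ?integral0 //.
    exact/measurable_EFinP/measurable_funM.
  apply: filterS g_ae0 => x /= gx0 /gx0 [] ->.
  by rewrite mul0r.
have [x0 gx0] := integral_neq0_exists_gt0 _ g0 ig_neq0.
have : 0 <= b by apply: le_trans (wb x0 gx0); rewrite lee_fin.
case: b wb => [r| |] //= wb r0.
- rewrite -ge0_integralZl_EFin //; last by move=> x _; rewrite lee_fin.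
  apply: ge0_le_integral => //.
  + by move=> x _; rewrite lee_fin mulr_ge0.
  + exact/measurable_EFinP/measurable_funM.
  + exact: measurable_funeM.
  move=> x _; rewrite -EFinM lee_fin mulrC.
  have [gx_eq0|gx_gt0] := eqVneq (g x) 0%R; first by rewrite gx_eq0 !(mulr0, mul0r).
  by rewrite ler_wpM2r // -lee_fin wb // lt_neqAle eq_sym gx_gt0 g0.
- rewrite gt0_mulye ?leey // lt_neqAle eq_sym ig_neq0 /=.
  by apply: integral_ge0 => x _; rewrite lee_fin.
Qed.

End nonneg_integral.

Section tempered_gibbs.
Context {R : realType} {d0 : measure_display} {X : measurableType d0}.
Variables (mu : {measure set X -> \bar R}) (d : nat) (f : X -> R).
Variables (fc gc : 'I_d -> X -> R).
Hypothesis d_gt0 : (0 < d)%N.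
Hypotheses (fc_ge0 : forall i x, 0 <= fc i x) (gc_ge0 : forall i x, 0 <= gc i x).
Hypotheses (fc_meas : forall i, measurable_fun setT (fc i))
  (gc_meas : forall i, measurable_fun setT (gc i)).

Local Notation p := (p_tgs fc gc).
Local Notation Z := (Z_tgs fc gc).
Local Notation w := (w_tgs fc gc).
Local Notation b := (b_tgs fc gc).

Lemma Z_tgs_ge0 x : 0 <= Z x.
Proof.
rewrite /Z_tgs mulr_ge0 ?invr_ge0 ?ler0n ?sumr_ge0 // => i _.
by rewrite /p_tgs divr_ge0.
Qed.

Lemma w_tgs_ge0 x : 0 <= w x.
Proof. by rewrite /w_tgs invr_ge0 Z_tgs_ge0. Qed.

Lemma measurable_Z_tgs : measurable_fun setT Z.
Proof.
apply: measurable_funM; first exact: measurable_cst.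
apply: measurable_sum => i; apply: measurable_funM => //.
exact: measurableT_comp (measurable_invr R) (fc_meas i).
Qed.

Lemma measurable_w_tgs : measurable_fun setT w.
Proof. exact: measurableT_comp (measurable_invr R) measurable_Z_tgs. Qed.

Lemma ratio_tgs_ge0 i x : (0 <= ratio_tgs fc gc i x)%E.
Proof. by rewrite /ratio_tgs; case: ifP => // _; rewrite lee_fin divr_ge0. Qed.

Lemma ratio_tgs_le_b i x : 0 < fc i x -> (ratio_tgs fc gc i x <= b)%E.
Proof. by move=> fcx; apply: ereal_sup_ubound; exists i, x. Qed.

Lemma mul_p_tgs_ge1 r i x : b = r%:E -> 0 < fc i x -> 1 <= r * p i x.
Proof.
move=> br fcx; have := ratio_tgs_le_b _ _ fcx; rewrite br /ratio_tgs.
have [//|gcx_neq0] := eqVneq (gc i x) 0; rewrite lee_fin => ratio_le.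
have gcx : 0 < gc i x by rewrite lt_neqAle eq_sym gcx_neq0 gc_ge0.
have p_gt0 : 0 < p i x by rewrite divr_gt0.
by move: (ler_wpM2r (ltW p_gt0) ratio_le); rewrite -invf_div mulVf // gt_eqF.
Qed.

Lemma mul_Z_tgs_ge1 r x : b = r%:E -> (forall i, 0 < fc i x) -> 1 <= r * Z x.
Proof.
move=> br fcx; have d_pos : 0 < d%:R :> R by rewrite ltr0n.
rewrite /Z_tgs mulrCA mulr_sumr -[leLHS](mulVf (lt0r_neq0 d_pos)).
apply: ler_wpM2l; first by rewrite invr_ge0 ltW.
have -> : d%:R = \sum_(i < d) (1 : R) by rewrite sumr_const card_ord.
by apply: ler_sum => i _; exact: mul_p_tgs_ge1.
Qed.

Lemma Z_tgs_gt0 x : b \is a fin_num -> (forall i, 0 < fc i x) -> 0 < Z x.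
Proof.
move=> /fineK/esym br fcx; rewrite lt_neqAle Z_tgs_ge0 andbT.
by move: (mul_Z_tgs_ge1 _ _ br fcx); apply: contraTneq => <-; rewrite mulr0 ler10.
Qed.

Lemma w_tgs_le_b x : (forall i, 0 < fc i x) -> ((w x)%:E <= b)%E.
Proof.
move=> fcx; have : (0 <= b)%E.
  exact: le_trans (ratio_tgs_ge0 (Ordinal d_gt0) x) (ratio_tgs_le_b _ _ (fcx _)).
case Eb : b => [r| |] //= _; last exact: leey.
rewrite lee_fin /w_tgs -div1r ler_pdivrMr ?(Z_tgs_gt0 _ _ fcx) ?Eb //.
exact: mul_Z_tgs_ge1.
Qed.

Hypotheses (f_ge0 : forall x, 0 <= f x) (f_meas : measurable_fun setT f).
Hypotheses (f_prob : (\int[mu]_x (f x)%:E = 1)%E)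
  (fZ_prob : (\int[mu]_x (f x * Z x)%:E = 1)%E).
Hypothesis fc_pos : forall i x, 0 < f x -> 0 < fc i x.

Let fc_gt0 x : f x != 0 -> forall i, 0 < fc i x.
Proof. by move=> fx_neq0 i; apply: fc_pos; rewrite lt_neqAle eq_sym fx_neq0 f_ge0. Qed.

Lemma Ef_w_tgs_le_b : (Ef mu f w <= b)%E.
Proof.
rewrite -[leRHS]mule1 -f_prob; apply: ge0_integral_mulr_le => //.
- exact: measurable_w_tgs.
- exact: w_tgs_ge0.
- by move=> x /gt_eqF/negbT/fc_gt0; exact: w_tgs_le_b.
Qed.

Lemma EfZ_w_tgs : b \is a fin_num -> EfZ mu f fc gc w = 1%E.
Proof.
move=> b_fin; rewrite /EfZ -f_prob; apply: eq_integral => x _; congr EFin.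
have [->|/fc_gt0 fcx] := eqVneq (f x) 0; first by rewrite !mul0r.
by rewrite -mulrA mulfV ?mulr1 // gt_eqF // (Z_tgs_gt0 _ b_fin fcx).
Qed.

Lemma VarW_integrandE_tgs x : b \is a fin_num ->
  f x * Z x * (w x - 1) ^+ 2 + 2 * f x = f x * w x + f x * Z x.
Proof.
move=> b_fin; have [->|/fc_gt0 fcx] := eqVneq (f x) 0.
  by rewrite !(mul0r, mulr0, addr0).
have Zw : Z x * w x = 1 by rewrite mulfV // gt_eqF // (Z_tgs_gt0 _ b_fin fcx).
suff -> : f x * Z x * (w x - 1) ^+ 2 + 2 * f x =
          f x * w x + f x * Z x + f x * (w x - 2) * (Z x * w x - 1).
  by rewrite Zw subrr mulr0 addr0.
by ring.
Qed.

Lemma VarW_tgs_add2 : b \is a fin_num -> (VarW mu f fc gc + 2%:E = Ef mu f w + 1)%E.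
Proof.
move=> b_fin; rewrite /VarW (EfZ_w_tgs b_fin) /=.
have int_2f : (\int[mu]_x (2 * f x)%:E = 2%:E)%E.
  under eq_integral do rewrite EFinM.
  rewrite ge0_integralZl_EFin ?f_prob ?mule1 //; last exact/measurable_EFinP.
  by move=> x _; rewrite lee_fin.
have mZ := measurable_Z_tgs; have mw := measurable_w_tgs.
rewrite /EfZ /Ef -int_2f -ge0_integralD_EFin //; first last.
- by move=> x; apply: mulr_ge0 (ler0n _ 2) (f_ge0 x).
- by move=> x; apply: mulr_ge0 (mulr_ge0 (f_ge0 x) (Z_tgs_ge0 x)) (sqr_ge0 _).
- exact: measurable_funM.
- apply: measurable_funM; first exact: measurable_funM.
  by apply/measurable_funX/measurable_funB => //; exact: measurable_cst.
under eq_integral do rewrite VarW_integrandE_tgs //.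
rewrite ge0_integralD_EFin ?fZ_prob //.
- exact: measurable_funM.
- exact: measurable_funM.
- by move=> x; rewrite mulr_ge0 ?w_tgs_ge0.
- by move=> x; apply: mulr_ge0 (f_ge0 x) (Z_tgs_ge0 x).
Qed.

Lemma VarW_tgs_le_b : (VarW mu f fc gc <= b - 1)%E.
Proof.
have := Ef_w_tgs_le_b; case Eb : b => [r| |] Efw_le.
- rewrite lee_suber_addr // -(@leeD2rE _ 1%E) // -addeA -EFinD.
  by rewrite VarW_tgs_add2 ?Eb // leeD2rE.
- by rewrite addye ?leey.
- suff : (0 <= Ef mu f w)%E by rewrite leNgt (le_lt_trans Efw_le) ?ltNyr.
  by apply: integral_ge0 => x _; rewrite lee_fin mulr_ge0 ?w_tgs_ge0.
Qed.

Variable h : X -> R.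
Hypothesis h_meas : measurable_fun setT h.

Lemma var_SIS_tgs_le : (var_SIS mu f fc gc h <= b * var_f mu f h)%E.
Proof.
rewrite /var_SIS /var_f /Ef; under eq_integral do rewrite mulrA.
apply: ge0_integral_mulr_le.
- apply: measurable_funM => //.
  by apply/measurable_funX/measurable_funB => //; exact: measurable_cst.
- exact: measurable_w_tgs.
- by move=> x; rewrite mulr_ge0 ?sqr_ge0.
- exact: w_tgs_ge0.
- move=> x /gt_eqF/negbT; rewrite mulf_eq0 negb_or => /andP[/fc_gt0 fcx _].
  exact: w_tgs_le_b.
Qed.

End tempered_gibbs.

Theorem proposition2 (R : realType) (d0 : measure_display) (X : measurableType d0)
  (mu : {measure set X -> \bar R}) (d : nat)
  (f : X -> R) (fc gc : 'I_d -> X -> R) (h : X -> R)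
  (d_gt0 : (0 < d)%N)
  (f_ge0 : forall x, 0 <= f x)
  (f_meas : measurable_fun setT f)
  (f_prob : (\int[mu]_x (f x)%:E = 1)%E)
  (fc_ge0 : forall i x, 0 <= fc i x)
  (gc_ge0 : forall i x, 0 <= gc i x)
  (fc_meas : forall i, measurable_fun setT (fc i))
  (gc_meas : forall i, measurable_fun setT (gc i))
  (fc_pos : forall i x, 0 < f x -> 0 < fc i x)
  (g_ac : forall i x, fc i x = 0 -> gc i x = 0)
  (fZ_prob : (\int[mu]_x (f x * Z_tgs fc gc x)%:E = 1)%E)
  (h_meas : measurable_fun setT h)
  (h_int : mu.-integrable setT (fun x => (f x * h x)%:E)) :
  (VarW mu f fc gc <= b_tgs fc gc - 1)%E /\
  (var_SIS mu f fc gc h <= b_tgs fc gc * var_f mu f h)%E.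
Proof. by split; [apply: VarW_tgs_le_b | apply: var_SIS_tgs_le]. Qed.
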